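(* Let $n \ge 3$ be an integer and let $I$ be a degree-based topological index with coefficients $c_{12},c_{13},c_{22},c_{23},c_{33}$. Define $c'_{12} = c_{12}-4c_{22}+3c_{23}$, $c'_{13} = c_{13}-3c_{22}+2c_{23}$, $c'_{33} = c_{22}-2c_{23}+c_{33}$. If $c'_{13}>c'_{12}>-c'_{33}>0$, then the path $P_n$ on $n$ vertices is, up to isomorphism, the only tree in $\mathcal{G}_3(n,n-1)$ that minimizes $I$.
   Context: For integers $n,m$, $\mathcal{G}_3(n,m)$ denotes the set of simple connected undirected graphs (chemical graphs) with $n$ vertices, $m$ edges and maximum degree at most $3$; in particular $\mathcal{G}_3(n,n-1)$ is the set of trees of order $n$ with maximum degree at most $3$. For a graph $G$ and $1\le i\le j$, an $ij$-edge is an edge whose endpoints have degrees $i$ and $j$, and $m_{ij}$ denotes the number of $ij$-edges of $G$. A degree-based topological index $I$ is a function on chemical graphs of order $n\ge 3$ of the form $I(G)=c_{12}m_{12}+c_{13}m_{13}+c_{22}m_{22}+c_{23}m_{23}+c_{33}m_{33}$, where the $c_{ij}$ are fixed real numbers. *)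

From HB Require Import structures.
From mathcomp Require Import all_boot all_order all_fingroup all_algebra.
Set Implicit Arguments. Unset Strict Implicit. Unset Printing Implicit Defensive.
Import Order.TTheory GRing.Theory Num.Theory.

Definition simple_graph (n : nat) (g : rel 'I_n) : Prop :=
  irreflexive g /\ symmetric g.

Definition deg (n : nat) (g : rel 'I_n) (x : 'I_n) : nat :=
  #|[set y | g x y]|.

Definition nedges (n : nat) (g : rel 'I_n) : nat :=
  #|[set p : 'I_n * 'I_n | (p.1 < p.2)%N && g p.1 p.2]|.

Definition connected_graph (n : nat) (g : rel 'I_n) : Prop :=
  forall x y : 'I_n, connect g x y.

Definition max_deg_le (n : nat) (g : rel 'I_n) (d : nat) : Prop :=
  forall x : 'I_n, (deg g x <= d)%N.

Definition chem_graph (n m : nat) (g : rel 'I_n) : Prop :=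
  [/\ simple_graph g, connected_graph g, nedges g = m & max_deg_le g 3].

Definition m_ij (n : nat) (g : rel 'I_n) (i j : nat) : nat :=
  #|[set p : 'I_n * 'I_n | [&& (p.1 < p.2)%N, g p.1 p.2,
        minn (deg g p.1) (deg g p.2) == i & maxn (deg g p.1) (deg g p.2) == j]]|.

Definition topo_index (R : numDomainType) (c12 c13 c22 c23 c33 : R)
    (n : nat) (g : rel 'I_n) : R :=
  (c12 * (m_ij g 1 2)%:R + c13 * (m_ij g 1 3)%:R + c22 * (m_ij g 2 2)%:R
   + c23 * (m_ij g 2 3)%:R + c33 * (m_ij g 3 3)%:R)%R.

Definition path_graph (n : nat) : rel 'I_n :=
  fun x y => ((x : nat).+1 == y) || ((y : nat).+1 == x).

Definition isomorphic (n : nat) (g1 g2 : rel 'I_n) : Prop :=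
  exists f : {perm 'I_n}, forall x y, g1 x y = g2 (f x) (f y).

Arguments chem_graph n m g : clear implicits.
Arguments path_graph n : clear implicits.

(** In a chemical tree let n_k be the number of vertices of degree k.  Counting
    edge ends gives n_1 = m12 + m13, 2 n_2 = m12 + 2 m22 + m23 and
    3 n_3 = m13 + m23 + 2 m33, while n_1 + n_2 + n_3 = n and
    n_1 + 2 n_2 + 3 n_3 = 2 (n - 1).  Eliminating m12, m22 and m23 yields
    I(T) = I(P_n) + c'12 n_3 + (c'13 - c'12) m13 + c'33 m33.  In a rooted tree
    every edge joins a vertex to its parent, and distinct edges have distinct
    child ends; so m33 <= n_3, and I(T) >= I(P_n) + (c'12 + c'33) n_3 with
    c'12 + c'33 > 0.  Hence the minimisers are exactly the trees without vertices of degree 3,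
    and a tree of maximum degree 2 is a path: numbering its vertices by their
    distance to a leaf is an isomorphism onto P_n. *)

From HB Require Import structures.
From mathcomp Require Import all_boot all_order all_fingroup all_algebra.
From mathcomp Require Import zify ring lra.
Import Order.TTheory GRing.Theory Num.Theory.

Set Implicit Arguments.
Unset Strict Implicit.
Unset Printing Implicit Defensive.

Definition edge_set n (g : rel 'I_n) : {set 'I_n * 'I_n} :=
  [set p : 'I_n * 'I_n | (p.1 < p.2)%N && g p.1 p.2].

Definition n_i n (g : rel 'I_n) (k : nat) : nat := #|[set x | deg g x == k]|.

Section RootedTree.

Variables (n : nat) (g : rel 'I_n) (r : 'I_n).
Hypotheses (g_irr : irreflexive g) (g_sym : symmetric g) (g_conn : connected_graph g).

Definition walk_from_root (x : 'I_n) (k : nat) : bool :=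
  [exists t : k.-tuple 'I_n, path g r t && (last r t == x)].

Lemma walk_from_rootP x p : path g r p -> last r p = x -> walk_from_root x (size p).
Proof. by move=> gp px; apply/existsP; exists (in_tuple p); rewrite /= gp px eqxx. Qed.

Lemma exists_walk_from_root x : exists k, walk_from_root x k.
Proof.
by have /connectP[p gp px] := g_conn r x; exists (size p); apply: walk_from_rootP.
Qed.

Definition dist (x : 'I_n) : nat := ex_minn (exists_walk_from_root x).

Lemma dist_spec x :
  walk_from_root x (dist x) /\ forall k, walk_from_root x k -> dist x <= k.
Proof. by rewrite /dist; case: ex_minnP. Qed.

Lemma dist_root : dist r = 0.
Proof.
have [_ /(_ 0 (walk_from_rootP (p := [::]) isT erefl))] := dist_spec r.
by case: dist.
Qed.

Lemma dist_edge x y : g x y -> dist y <= (dist x).+1.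
Proof.
move=> gxy; have [/existsP[t /andP[gt /eqP tx]] _] := dist_spec x.
have gty : path g r (rcons t y) by rewrite rcons_path gt tx.
have [_ /(_ _ (walk_from_rootP gty (last_rcons _ _ _)))] := dist_spec y.
by rewrite size_rcons size_tuple.
Qed.

Lemma dist_lt x : dist x < n.
Proof.
have /connectP[p gp ->] := g_conn r x; case/shortenP: gp => q gq uq _.
have [_ /(_ _ (walk_from_rootP gq erefl))] := dist_spec (last r q).
have := max_card (mem (r :: q)); rewrite (card_uniqP uq) card_ord /=; lia.
Qed.

Lemma exists_parent x :
  x != r -> exists y, g y x && ((dist y).+1 == dist x).
Proof.
move=> xr; have [/existsP[t /andP[gt /eqP tx]] _] := dist_spec x.
have := size_tuple t; move: (tval t) gt tx => s.
case/lastP: s => [_ /= rx|p z]; first by rewrite rx eqxx in xr.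
rewrite rcons_path last_rcons size_rcons => /andP[gp gz] zx sz; subst z.
exists (last r p); rewrite gz /=.
have [_ /(_ _ (walk_from_rootP gp erefl)) le_p] := dist_spec (last r p).
have := dist_edge gz; rewrite -sz => le_d; by rewrite eqSS eqn_leq le_p -ltnS le_d.
Qed.

Definition parent (x : 'I_n) : 'I_n :=
  odflt r [pick y | g y x && ((dist y).+1 == dist x)].

Lemma parentP x : x != r -> g (parent x) x /\ (dist (parent x)).+1 = dist x.
Proof.
move=> xr; rewrite /parent; case: pickP => [y /andP[gyx /eqP] //|none].
by have [y] := exists_parent xr; rewrite none.
Qed.

Lemma dist_eq0 x : dist x = 0 -> x = r.
Proof. by move=> dx; apply/eqP/negPn/negP => /parentP[_]; rewrite dx. Qed.

Definition parent_edge (x : 'I_n) : 'I_n * 'I_n :=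
  if x < parent x then (x, parent x) else (parent x, x).

Lemma parent_edge_in x : x != r -> parent_edge x \in edge_set g.
Proof.
move=> xr; have [gpx dpx] := parentP xr; rewrite /parent_edge inE.
case: (ltngtP x (parent x)) => [xp|px|/val_inj xp] /=.
- by rewrite xp g_sym gpx.
- by rewrite px gpx.
- by rewrite -xp in dpx; lia.
Qed.

Lemma parent_edge_inj : {in [set~ r] &, injective parent_edge}.
Proof.
move=> x y; rewrite !inE => xr yr; have [_ dx] := parentP xr; have [_ dy] := parentP yr.
rewrite /parent_edge; do 2!case: ifP => _; case=> ex ey //.
all: by have := congr1 dist ex; have := congr1 dist ey; lia.
Qed.

Hypothesis g_tree : nedges g = n.-1.

Lemma edge_setE : edge_set g = parent_edge @: [set~ r].
Proof.
apply/eqP; rewrite eq_sym eqEcard; apply/andP; split.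
  by apply/subsetP => p /imsetP[x]; rewrite in_setC1 => xr ->; apply: parent_edge_in.
by rewrite card_in_imset ?cardsC1 ?card_ord -?g_tree //; apply: parent_edge_inj.
Qed.

Lemma tree_edgeP u v :
  g u v -> (v != r /\ parent v = u) \/ (u != r /\ parent u = v).
Proof.
wlog uv : u v / u < v => [wlog_uv guv|guv].
  case: (ltngtP u v) => [/wlog_uv/(_ guv) //|vu|/val_inj uv].
    by rewrite g_sym in guv; have [|] := wlog_uv _ _ vu guv; [right|left].
  by rewrite uv g_irr in guv.
have : (u, v) \in edge_set g by rewrite inE uv guv.
rewrite edge_setE => /imsetP[x]; rewrite !inE /parent_edge => xr.
by case: ifP => _ [-> ->]; [right|left].
Qed.

Lemma card_edges_within (A : {set 'I_n}) :
  #|[set p in edge_set g | (p.1 \in A) && (p.2 \in A)]| <= #|A|.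
Proof.
apply: leq_trans (leq_imset_card parent_edge A); apply: subset_leq_card.
apply/subsetP => p; rewrite inE edge_setE => /andP[/imsetP[x _ ->] ends].
by apply: imset_f; move: ends; rewrite /parent_edge; case: ifP => _ /andP[].
Qed.

Hypotheses (deg_le2 : forall x, deg g x <= 2) (leaf_r : deg g r = 1).

Lemma parent_inj : {in [set~ r] &, injective parent}.
Proof.
move=> x y; rewrite !inE => xr yr pxy; apply/eqP/negPn/negP => xy.
have [gx dx] := parentP xr; have [gy dy] := parentP yr.
have [pr|pr] := eqVneq (parent x) r.
  suff : 1 < deg g r by rewrite leaf_r.
  by apply/card_gt1P; exists x, y; rewrite !inE -pr gx pxy gy.
have [gpp dpp] := parentP pr.
suff : 2 < deg g (parent x) by rewrite ltnNge deg_le2.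
have gy' : g (parent x) y by rewrite pxy.
apply/card_gt2P; exists x, y, (parent (parent x)); rewrite !inE gx gy' g_sym gpp.
have := congr1 dist pxy.
by split=> //; split=> //; apply/eqP => /(congr1 dist); lia.
Qed.

Lemma dist_inj : injective dist.
Proof.
suff eq_dist k x y : dist x = k -> dist y = k -> x = y.
  by move=> x y dxy; apply: (eq_dist _ x y dxy).
elim: k x y => [|k IH] x y dx dy; first by rewrite (dist_eq0 dx) (dist_eq0 dy).
have xr : x != r by apply/eqP => xr; rewrite xr dist_root in dx.
have yr : y != r by apply/eqP => yr; rewrite yr dist_root in dy.
have [_ ex] := parentP xr; have [_ ey] := parentP yr.
by apply: parent_inj; rewrite ?in_setC1 //; apply: IH; lia.
Qed.

Lemma edge_of_dist_succ x y : (dist x).+1 = dist y -> g x y.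
Proof.
move=> dxy; have yr : y != r by apply/eqP => yr; rewrite yr dist_root in dxy.
have [gpy dpy] := parentP yr.
by have -> : x = parent y by apply: dist_inj; lia.
Qed.

Definition dist_ord (x : 'I_n) : 'I_n := Ordinal (dist_lt x).

Lemma dist_ord_inj : injective dist_ord.
Proof. by move=> x y [/dist_inj]. Qed.

Lemma isomorphic_path_from_leaf : isomorphic g (path_graph n).
Proof.
exists (perm dist_ord_inj) => x y; rewrite !permE /path_graph /=.
apply/idP/orP => [/tree_edgeP[[yr <-]|[xr <-]]|].
- by have [_ ->] := parentP yr; left.
- by have [_ ->] := parentP xr; right.
by case=> /eqP /edge_of_dist_succ; rewrite 1?g_sym.
Qed.

End RootedTree.

Section Handshake.

Variables (n : nat) (g : rel 'I_n).
Hypotheses (g_irr : irreflexive g) (g_sym : symmetric g).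

Lemma sum_arcs (f : 'I_n -> nat) :
  \sum_(p | g p.1 p.2) f p.1 = \sum_x f x * deg g x.
Proof.
rewrite -(pair_big_dep xpredT g (fun x _ => f x)) /=; apply: eq_bigr => x _.
by rewrite (eq_bigl (mem [set y | g x y])) => [|y]; rewrite ?inE // sum_nat_const mulnC.
Qed.

Lemma handshake (f : 'I_n -> nat) :
  \sum_(p in edge_set g) (f p.1 + f p.2) = \sum_x f x * deg g x.
Proof.
rewrite -sum_arcs big_split /=.
rewrite (bigID (fun p : 'I_n * 'I_n => p.1 < p.2) (fun p => g p.1 p.2)) /=.
congr (_ + _); first by apply: eq_bigl => p; rewrite inE andbC.
rewrite (reindex_inj (can_inj (@swap_pairK 'I_n 'I_n))) /=; apply: eq_bigl => p.
rewrite inE /= g_sym; case gp: (g p.1 p.2); rewrite ?andbF //= andbT -leqNgt ltn_neqAle.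
suff -> : (p.2 : nat) != p.1 by [].
by rewrite (inj_eq val_inj); apply: contraTneq gp => ->; rewrite g_irr.
Qed.

End Handshake.

Definition edge_type (a b i j : nat) : bool := (minn a b == i) && (maxn a b == j).

Lemma edge_type_split a b : 0 < a <= 3 -> 0 < b <= 3 -> (a != 1) || (b != 1) ->
  [/\ (a == 1) + (b == 1) = edge_type a b 1 2 + edge_type a b 1 3,
      (a == 2) + (b == 2) =
        edge_type a b 1 2 + 2 * edge_type a b 2 2 + edge_type a b 2 3 &
      (a == 3) + (b == 3) =
        edge_type a b 1 3 + edge_type a b 2 3 + 2 * edge_type a b 3 3].
Proof. by case: a b => [|[|[|[|a]]]] [|[|[|[|b]]]]. Qed.

Lemma m_ij_sum n (g : rel 'I_n) i j :
  m_ij g i j = \sum_(p in edge_set g) edge_type (deg g p.1) (deg g p.2) i j.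
Proof.
rewrite /m_ij -sum1_card big_mkcond [RHS]big_mkcond; apply: eq_bigr => p _.
rewrite !inE /edge_type.
by case: (p.1 < p.2); case: (g _ _); case: (_ == i); case: (_ == j).
Qed.

Lemma n_i_sum n (g : rel 'I_n) k : n_i g k = \sum_x (deg g x == k).
Proof.
rewrite /n_i -sum1_card big_mkcond; apply: eq_bigr => x _.
by rewrite inE; case: (_ == k).
Qed.

Lemma sum_deg_eq n (g : rel 'I_n) k : \sum_x (deg g x == k) * deg g x = n_i g k * k.
Proof.
by rewrite n_i_sum big_distrl; apply: eq_bigr => x _; case: eqP => [->|].
Qed.

Section ChemicalTree.

Variables (n : nat) (g : rel 'I_n).
Hypotheses (n_ge3 : 3 <= n) (g_chem : chem_graph n n.-1 g).

Let g_irr : irreflexive g. Proof. by case: g_chem => -[]. Qed.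
Let g_sym : symmetric g. Proof. by case: g_chem => -[]. Qed.
Let g_conn : connected_graph g. Proof. by case: g_chem. Qed.
Let g_tree : nedges g = n.-1. Proof. by case: g_chem. Qed.
Let g_deg3 : forall x, deg g x <= 3. Proof. by case: g_chem. Qed.

Lemma deg_gt0 x : 0 < deg g x.
Proof.
have /card_gt0P[y] : 0 < #|[set~ x]| by rewrite cardsC1 card_ord; lia.
rewrite in_setC1 => yx; have /connectP[[|z p] /= gp py] := g_conn x y.
  by rewrite py eqxx in yx.
by case/andP: gp => gxz _; apply/card_gt0P; exists z; rewrite inE.
Qed.

Lemma no_leaf_leaf_edge u v : g u v -> deg g u = 1 -> deg g v = 1 -> False.
Proof.
move=> guv du dv.
have only_nb w w' : deg g w = 1 -> g w w' -> [set y | g w y] = [set w'].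
  move=> dw gww'; apply/eqP; rewrite eq_sym eqEcard sub1set inE gww'.
  by rewrite cards1 -/(deg g w) dw.
have /card_gt0P[w] : 0 < #|[set~ u] :\ v|.
  by have := cardsD1 v [set~ u]; rewrite cardsC1 card_ord; case: (v \in _); lia.
rewrite !inE => /andP[wv wu].
have uv_closed : closed g (mem [set u; v]).
  apply: intro_closed => [|x y gxy]; first exact: sym_connect_sym.
  rewrite !inE => /orP[] /eqP ex; move: gxy; rewrite ex => gy.
    by move/setP/(_ y): (only_nb _ _ du guv); rewrite !inE gy => <-; rewrite orbT.
  by move/setP/(_ y): (only_nb _ _ dv (etrans (g_sym v u) guv)); rewrite !inE gy => <-.
have := closed_connect uv_closed (g_conn u w); rewrite !inE eqxx.
by rewrite (negbTE wu) (negbTE wv).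
Qed.

Lemma edge_type_counts :
  [/\ n_i g 1 = m_ij g 1 2 + m_ij g 1 3,
      n_i g 2 * 2 = m_ij g 1 2 + 2 * m_ij g 2 2 + m_ij g 2 3 &
      n_i g 3 * 3 = m_ij g 1 3 + m_ij g 2 3 + 2 * m_ij g 3 3].
Proof.
have count k : \sum_(p in edge_set g) ((deg g p.1 == k) + (deg g p.2 == k)) = n_i g k * k.
  by rewrite (handshake g_irr g_sym (fun x => deg g x == k)) sum_deg_eq.
have deg_range x : 0 < deg g x <= 3 by rewrite deg_gt0 g_deg3.
have not_leaf_leaf p : p \in edge_set g -> (deg g p.1 != 1) || (deg g p.2 != 1).
  rewrite inE -negb_and => /andP[_ gp]; apply/negP => /andP[/eqP d1 /eqP d2].
  exact: no_leaf_leaf_edge gp d1 d2.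
have split_edge p := edge_type_split (deg_range p.1) (deg_range p.2).
split; [rewrite -[n_i g 1]muln1 -count !m_ij_sum -big_split
       | rewrite -count !m_ij_sum big_distrr -!big_split ..] => /=;
  by apply: eq_bigr => p /not_leaf_leaf/split_edge[].
Qed.

Lemma vertex_counts :
  n_i g 1 + n_i g 2 + n_i g 3 = n /\
  n_i g 1 + n_i g 2 * 2 + n_i g 3 * 3 = n.-1 * 2.
Proof.
have one_hot x : (deg g x == 1) + (deg g x == 2) + (deg g x == 3) = 1.
  by have := deg_gt0 x; have := g_deg3 x; case: (deg g x) => [|[|[|[|]]]].
split.
  rewrite !n_i_sum -!big_split /= (eq_bigr (fun=> 1)) => [|x _]; last exact: one_hot.
  by rewrite sum1_card card_ord.
rewrite -[n_i g 1]muln1 -!sum_deg_eq -!big_split /=.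
rewrite (eq_bigr (fun x => 1 * deg g x)) => [|x _]; last by rewrite -!mulnDl one_hot.
by rewrite -(handshake g_irr g_sym (fun=> 1)) sum_nat_const -g_tree.
Qed.

Lemma chem_tree_counts :
  [/\ m_ij g 1 2 + m_ij g 1 3 = n_i g 3 + 2,
      m_ij g 2 2 + n_i g 3 * 4 + 3 = n + m_ij g 1 3 + m_ij g 3 3 &
      m_ij g 2 3 + m_ij g 1 3 + 2 * m_ij g 3 3 = n_i g 3 * 3].
Proof. have [? ? ?] := edge_type_counts; have [? ?] := vertex_counts; split; lia. Qed.

Lemma m_ij33_le : m_ij g 3 3 <= n_i g 3.
Proof.
have r : 'I_n by exists 0; lia.
apply: (leq_trans _ (card_edges_within r g_sym g_conn g_tree [set x | deg g x == 3])).
apply: subset_leq_card; apply/subsetP => p; rewrite !inE /edge_type.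
case/and4P => -> -> /eqP min3 /eqP max3 /=.
by apply/andP; split; apply/eqP; lia.
Qed.

Lemma isomorphic_path_of_deg_le2 :
  (forall x, deg g x <= 2) -> isomorphic g (path_graph n).
Proof.
move=> deg_le2; have [n1E _ _] := edge_type_counts; have [leavesE _ _] := chem_tree_counts.
have /card_gt0P[r] : 0 < n_i g 1 by rewrite n1E leavesE addn2.
by rewrite inE => /eqP /(isomorphic_path_from_leaf g_irr g_sym g_conn g_tree deg_le2).
Qed.

End ChemicalTree.

Lemma deg_isomorphic n (g1 g2 : rel 'I_n) (f : {perm 'I_n}) :
  (forall x y, g1 x y = g2 (f x) (f y)) -> forall x, deg g1 x = deg g2 (f x).
Proof.
move=> fE x; rewrite /deg -[RHS](card_preimset _ (@perm_inj _ f)).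
by apply: eq_card => y; rewrite !inE fE.
Qed.

Lemma n_i3_eq0P n (g : rel 'I_n) :
  (forall x, deg g x <= 3) -> n_i g 3 = 0 <-> forall x, deg g x <= 2.
Proof.
move=> deg3; split=> [/eqP|deg2]; last first.
  apply/eqP; rewrite cards_eq0; apply/eqP/setP => x; rewrite !inE.
  by have := deg2 x; case: eqP => // ->.
rewrite cards_eq0 => /eqP/setP n3 x; have := n3 x; rewrite !inE.
by have := deg3 x; rewrite leq_eqVlt ltnS => /orP[/eqP ->|].
Qed.

Section PathGraph.

Variable n : nat.

Lemma path_graph_irr : irreflexive (path_graph n).
Proof.
by move=> x; rewrite /path_graph; case: eqP => [/esym/n_Sn|_] //; case: eqP => // /n_Sn.
Qed.

Lemma path_graph_sym : symmetric (path_graph n).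
Proof. by move=> x y; rewrite /path_graph orbC. Qed.

Lemma path_graph_deg_le2 x : deg (path_graph n) x <= 2.
Proof.
case: n x => [[] //|m] x.
have nbs : [set y | path_graph m.+1 x y] \subset [set inord x.+1; inord x.-1].
  apply/subsetP => y; rewrite !inE /path_graph => /orP[] /eqP xy; apply/orP.
    by left; apply/eqP/val_inj; rewrite /= -xy inordK ?xy ?ltn_ord.
  by right; apply/eqP/val_inj; rewrite /= -xy inordK ?ltn_ord.
by rewrite (leq_trans (subset_leq_card nbs)) // cards2; case: (_ != _).
Qed.

Lemma path_graph_connected : connected_graph (path_graph n).
Proof.
suff conn_up k (i j : 'I_n) : (j : nat) = i + k -> connect (path_graph n) i j.
  move=> i j; case: (leqP i j) => ij; first by apply: (conn_up (j - i)); lia.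
  by rewrite (sym_connect_sym path_graph_sym); apply: (conn_up (i - j)); lia.
elim: k j => [|k IH] j jE; first by rewrite (val_inj (etrans jE (addn0 i))).
have ik : i + k < n by have := ltn_ord j; lia.
apply: connect_trans (IH (Ordinal ik) erefl) (connect1 _).
by rewrite /path_graph /= jE addnS eqxx.
Qed.

Lemma path_graph_nedges : nedges (path_graph n) = n.-1.
Proof.
case: n => [|m]; first by rewrite /nedges; apply: eq_card0 => -[[]].
change (#|edge_set (path_graph m.+1)| = m).
pose succ_edge (x : 'I_m.+1) := (x, inord x.+1 : 'I_m.+1).
have -> : edge_set (path_graph m.+1) = succ_edge @: [set~ ord_max].
  apply/setP => -[x y]; rewrite inE /path_graph /=.
  apply/andP/imsetP => [[xy /orP[/eqP xy1|/eqP yx]]|[z]].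
  - exists x; first by rewrite in_setC1 -(inj_eq val_inj) /=; have := ltn_ord y; lia.
    by rewrite /succ_edge; congr pair; apply: val_inj; rewrite /= inordK xy1 ?ltn_ord.
  - lia.
  - rewrite in_setC1 -(inj_eq val_inj) /= => zm [-> ->].
    by rewrite /= inordK; [rewrite ltnSn eqxx | have := ltn_ord z; lia].
by rewrite card_in_imset ?cardsC1 ?card_ord // => x y _ _ [].
Qed.

Lemma path_graph_chem : chem_graph n n.-1 (path_graph n).
Proof.
split; [split|..]; rewrite ?path_graph_nedges //.
- exact: path_graph_irr.
- exact: path_graph_sym.
- exact: path_graph_connected.
by move=> x; apply: leq_trans (path_graph_deg_le2 x) _.
Qed.

End PathGraph.

Section TopologicalIndex.

Local Open Scope ring_scope.

Variables (R : realFieldType) (c12 c13 c22 c23 c33 : R).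
Variables (n : nat) (g : rel 'I_n).
Hypotheses (n_ge3 : (3 <= n)%N) (g_chem : chem_graph n n.-1 g).

Local Notation c'12 := (c12 - 4 * c22 + 3 * c23).
Local Notation c'13 := (c13 - 3 * c22 + 2 * c23).
Local Notation c'33 := (c22 - 2 * c23 + c33).
Local Notation I := (topo_index c12 c13 c22 c23 c33).
(* [P_n] has two 12-edges and [n - 3] 22-edges. *)
Local Notation I_path := (2 * c12 + (n - 3)%:R * c22).

Lemma topo_index_chem_tree :
  I g = I_path + c'12 * (n_i g 3)%:R + (c'13 - c'12) * (m_ij g 1 3)%:R
        + c'33 * (m_ij g 3 3)%:R.
Proof.
have cast (a b : nat) : a = b -> a%:R = b%:R :> R by move=> ->.
have [/cast e12 /cast e22 /cast e23] := chem_tree_counts n_ge3 g_chem.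
rewrite !natrD !natrM in e12 e22 e23; rewrite /topo_index natrB //.
have -> : (m_ij g 1 2)%:R = (n_i g 3)%:R + 2 - (m_ij g 1 3)%:R :> R by lra.
have -> : (m_ij g 2 2)%:R = n%:R - 3 - 4 * (n_i g 3)%:R + (m_ij g 1 3)%:R
  + (m_ij g 3 3)%:R :> R by lra.
have -> : (m_ij g 2 3)%:R = 3 * (n_i g 3)%:R - (m_ij g 1 3)%:R
  - 2 * (m_ij g 3 3)%:R :> R by lra.
ring.
Qed.

Lemma topo_index_no_deg3 : n_i g 3 = 0%N -> I g = I_path.
Proof.
move=> n3; have [_ _] := chem_tree_counts n_ge3 g_chem; rewrite n3 => e23.
have [m13_0 m33_0] : m_ij g 1 3 = 0%N /\ m_ij g 3 3 = 0%N by lia.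
by rewrite topo_index_chem_tree n3 m13_0 m33_0 !mulr0 !addr0.
Qed.

Lemma topo_index_ge_path :
  c'12 < c'13 -> - c'33 < c'12 -> 0 < - c'33 ->
  I_path <= I g ?= iff (n_i g 3 == 0%N).
Proof.
move=> c12_lt c33_lt c33_lt0.
have m33_le : (m_ij g 3 3)%:R <= (n_i g 3)%:R :> R by rewrite ler_nat m_ij33_le.
have n3_ge0 : 0 <= (n_i g 3)%:R :> R := ler0n _ _.
have m13_ge0 : 0 <= (m_ij g 1 3)%:R :> R := ler0n _ _.
have : 0 <= (c'13 - c'12) * (m_ij g 1 3)%:R by apply: mulr_ge0; lra.
have : 0 <= (- c'33) * ((n_i g 3)%:R - (m_ij g 3 3)%:R) by apply: mulr_ge0; lra.
have : 0 <= (c'12 + c'33) * (n_i g 3)%:R by apply: mulr_ge0; lra.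
move=> ge0_3 ge0_33 ge0_13; have IgE := topo_index_chem_tree.
split; first lra.
apply/idP/eqP => [/eqP path_eq|/topo_index_no_deg3 ->]; last exact: eqxx.
have c'_pos : 0 < c'12 + c'33 by lra.
apply/eqP; rewrite -leqn0 -(ler_nat R) -(pmulr_rle0 _ c'_pos); lra.
Qed.

End TopologicalIndex.

Lemma n_i3_eq0_iso_path n (g : rel 'I_n) :
  (3 <= n)%N -> chem_graph n n.-1 g -> n_i g 3 = 0%N <-> isomorphic g (path_graph n).
Proof.
move=> n_ge3 g_chem; have [_ _ _ g_deg3] := g_chem; rewrite n_i3_eq0P //.
split=> [|[f fE] x]; first exact: isomorphic_path_of_deg_le2.
by rewrite (deg_isomorphic fE) path_graph_deg_le2.
Qed.

Unset Implicit Arguments.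
Local Open Scope ring_scope.

Theorem corollary1 (R : realFieldType) (c12 c13 c22 c23 c33 : R) (n : nat) :
  (3 <= n)%N ->
  let c'12 := c12 - 4 * c22 + 3 * c23 in
  let c'13 := c13 - 3 * c22 + 2 * c23 in
  let c'33 := c22 - 2 * c23 + c33 in
  c'12 < c'13 -> - c'33 < c'12 -> 0 < - c'33 ->
  chem_graph n n.-1 (path_graph n) /\
  forall T : rel 'I_n, chem_graph n n.-1 T ->
    ((forall T' : rel 'I_n, chem_graph n n.-1 T' ->
        topo_index c12 c13 c22 c23 c33 T <= topo_index c12 c13 c22 c23 c33 T')
     <-> isomorphic T (path_graph n)).
Proof.
move=> n_ge3 /= c12_lt c33_lt c33_lt0; split=> [|T T_chem]; first exact: path_graph_chem.
have I_ge_path T' (T'_chem : chem_graph n n.-1 T') :=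
  topo_index_ge_path n_ge3 T'_chem c12_lt c33_lt c33_lt0.
have [_ _ _ path_deg3] := path_graph_chem n.
have [_] := I_ge_path _ (path_graph_chem n).
rewrite ((n_i3_eq0P path_deg3).2 (@path_graph_deg_le2 n)) eqxx => /eqP I_pathE.
have [I_ge I_eq] := I_ge_path T T_chem.
rewrite -n_i3_eq0_iso_path //; split=> [T_min|n3_0 T' T'_chem].
  by apply/eqP; rewrite -I_eq eq_le I_ge I_pathE (T_min _ (path_graph_chem n)).
move: I_eq; rewrite n3_0 eqxx => /eqP <-.
by have [] := I_ge_path T' T'_chem.
Qed.
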